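(* Define $q:\mathbb R_+\times\mathbb R^4\times\mathbb R^4\to\mathbb R$ by $$q(\Sigma,\mathbf a,\boldsymbol\zeta)=\nu a_1+\frac12a_2(\sigma^2-\Sigma^2)+\sigma\eta a_3+\frac12(\eta^2+\xi)a_4,$$ where $\mathbf a=(a_1,a_2,a_3,a_4)^\top$ and $\boldsymbol\zeta=(\nu,\sigma,\eta,\xi)^\top$. Then for all $\Sigma\in\mathbb R_+$, $\mathbf a\in\mathbb R^4$, $\boldsymbol\zeta\in\mathbb R^4$, $$|q(\Sigma,\mathbf a,\boldsymbol\zeta)|\le\max(1,\Sigma)\|\mathbf a\|\,\|\boldsymbol\zeta-\boldsymbol\zeta^0(\Sigma)\|+\|\mathbf a\|\,\|\boldsymbol\zeta-\boldsymbol\zeta^0(\Sigma)\|^2.$$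
   Context: $\boldsymbol\zeta^0(\Sigma)=(0,\Sigma,0,0)^\top$ and $\|\cdot\|$ denotes the Euclidean norm on $\mathbb R^4$. *)

From Stdlib Require Import Reals.
Open Scope R_scope.

Definition R4 : Type := (R * R * R * R)%type.

Definition norm4 (v : R4) : R :=
  let '(x1, x2, x3, x4) := v in sqrt (x1^2 + x2^2 + x3^2 + x4^2).

Definition sub4 (v w : R4) : R4 :=
  let '(v1, v2, v3, v4) := v in let '(w1, w2, w3, w4) := w in
  (v1 - w1, v2 - w2, v3 - w3, v4 - w4).

Definition zeta0 (Sig : R) : R4 := (0, Sig, 0, 0).

Definition q (Sig : R) (a zeta : R4) : R :=
  let '(a1, a2, a3, a4) := a in
  let '(nu, sig, eta, xi) := zeta in
  nu * a1 + / 2 * a2 * (sig^2 - Sig^2) + sig * eta * a3 + / 2 * (eta^2 + xi) * a4.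

(* Write d = zeta - zeta0(Sigma).  Expanding sigma = Sigma + d2 shows that
   q(Sigma, a, zeta) = <a, L d> + <a, Q d> with the linear part
   L d = (d1, Sigma d2, Sigma d3, d4/2) and the quadratic part
   Q d = (0, d2^2/2, d2 d3, d3^2/2).  Clearly |L d| <= max(1, Sigma) |d|, and
   |Q d|^2 = d2^4/4 + d2^2 d3^2 + d3^4/4 <= (d2^2 + d3^2)^2 <= |d|^4, so
   Cauchy-Schwarz gives the bound. *)
From Stdlib Require Import Reals Lra Psatz.
Open Scope R_scope.

Definition sqnorm4 (v : R4) : R :=
  let '(x1, x2, x3, x4) := v in x1^2 + x2^2 + x3^2 + x4^2.

Definition dot4 (v w : R4) : R :=
  let '(v1, v2, v3, v4) := v in let '(w1, w2, w3, w4) := w in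
  v1 * w1 + v2 * w2 + v3 * w3 + v4 * w4.

Lemma sqnorm4_ge0 (v : R4) : 0 <= sqnorm4 v.
Proof. destruct v as [[[x1 x2] x3] x4]; cbn [sqnorm4]; nra. Qed.

Lemma norm4_sqrt (v : R4) : norm4 v = sqrt (sqnorm4 v).
Proof. now destruct v as [[[x1 x2] x3] x4]. Qed.

Lemma norm4_ge0 (v : R4) : 0 <= norm4 v.
Proof. rewrite norm4_sqrt; apply sqrt_pos. Qed.

Lemma norm4_sqr (v : R4) : norm4 v ^ 2 = sqnorm4 v.
Proof. rewrite norm4_sqrt; apply pow2_sqrt, sqnorm4_ge0. Qed.

Lemma Rabs_le_of_sqr_le (x c : R) : 0 <= c -> x ^ 2 <= c ^ 2 -> Rabs x <= c.
Proof.
  intros Hc Hx.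
  rewrite <- (Rabs_pos_eq c Hc).
  apply Rsqr_le_abs_0; unfold Rsqr; lra.
Qed.

Lemma norm4_le (v : R4) (c : R) : 0 <= c -> sqnorm4 v <= c ^ 2 -> norm4 v <= c.
Proof.
  intros Hc Hv.
  rewrite <- (Rabs_pos_eq (norm4 v) (norm4_ge0 v)).
  apply Rabs_le_of_sqr_le; [exact Hc|].
  rewrite norm4_sqr; exact Hv.
Qed.

Lemma dot4_sqr_le (v w : R4) : dot4 v w ^ 2 <= sqnorm4 v * sqnorm4 w.
Proof.
  destruct v as [[[v1 v2] v3] v4], w as [[[w1 w2] w3] w4]; cbn [dot4 sqnorm4].
  assert (Hlagrange :
    (v1^2 + v2^2 + v3^2 + v4^2) * (w1^2 + w2^2 + w3^2 + w4^2)
    - (v1*w1 + v2*w2 + v3*w3 + v4*w4)^2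
    = (v1*w2 - v2*w1)^2 + (v1*w3 - v3*w1)^2 + (v1*w4 - v4*w1)^2
      + (v2*w3 - v3*w2)^2 + (v2*w4 - v4*w2)^2 + (v3*w4 - v4*w3)^2) by ring.
  assert (0 <= (v1*w2 - v2*w1)^2 + (v1*w3 - v3*w1)^2 + (v1*w4 - v4*w1)^2
               + (v2*w3 - v3*w2)^2 + (v2*w4 - v4*w2)^2 + (v3*w4 - v4*w3)^2)
    by (repeat apply Rplus_le_le_0_compat; apply pow2_ge_0).
  lra.
Qed.

Lemma Rabs_dot4_le (v w : R4) : Rabs (dot4 v w) <= norm4 v * norm4 w.
Proof.
  apply Rabs_le_of_sqr_le.
  - apply Rmult_le_pos; apply norm4_ge0.
  - rewrite Rpow_mult_distr, !norm4_sqr; apply dot4_sqr_le.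
Qed.

Definition q_lin (Sig : R) (d : R4) : R4 :=
  let '(d1, d2, d3, d4) := d in (d1, Sig * d2, Sig * d3, / 2 * d4).

Definition q_quad (d : R4) : R4 :=
  let '(_, d2, d3, _) := d in (0, / 2 * d2^2, d2 * d3, / 2 * d3^2).

Lemma q_decomp (Sig : R) (a zeta : R4) :
  let d := sub4 zeta (zeta0 Sig) in
  q Sig a zeta = dot4 a (q_lin Sig d) + dot4 a (q_quad d).
Proof.
  destruct a as [[[a1 a2] a3] a4], zeta as [[[nu sig] eta] xi];
    cbn [q dot4 q_lin q_quad sub4 zeta0].
  field.
Qed.

Lemma norm4_q_lin_le (Sig : R) (d : R4) :
  0 <= Sig -> norm4 (q_lin Sig d) <= Rmax 1 Sig * norm4 d.
Proof.
  intros HSig.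
  assert (H1 := Rmax_l 1 Sig); assert (HS := Rmax_r 1 Sig).
  apply norm4_le.
  - apply Rmult_le_pos; [lra | apply norm4_ge0].
  - rewrite Rpow_mult_distr, norm4_sqr.
    destruct d as [[[d1 d2] d3] d4]; cbn [q_lin sqnorm4].
    set (M := Rmax 1 Sig) in *.
    assert (HM1 : 1 <= M ^ 2) by nra.
    assert (HMS : Sig ^ 2 <= M ^ 2) by nra.
    nra.
Qed.

Lemma norm4_q_quad_le (d : R4) : norm4 (q_quad d) <= norm4 d ^ 2.
Proof.
  apply norm4_le; [apply pow2_ge_0|].
  rewrite norm4_sqr.
  destruct d as [[[d1 d2] d3] d4]; cbn [q_quad sqnorm4].
  assert (Hd1 := pow2_ge_0 d1); assert (Hd2 := pow2_ge_0 d2).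
  assert (Hd3 := pow2_ge_0 d3); assert (Hd4 := pow2_ge_0 d4).
  apply Rle_trans with ((d2 ^ 2 + d3 ^ 2) ^ 2).
  - nra.
  - apply pow_incr; lra.
Qed.

Theorem lemma5p4 (Sig : R) (a zeta : R4) :
  0 <= Sig ->
  Rabs (q Sig a zeta) <=
    Rmax 1 Sig * norm4 a * norm4 (sub4 zeta (zeta0 Sig))
    + norm4 a * (norm4 (sub4 zeta (zeta0 Sig)))^2.
Proof.
  intros HSig.
  rewrite q_decomp.
  set (d := sub4 zeta (zeta0 Sig)).
  assert (Ha := norm4_ge0 a).
  assert (Hlin := Rmult_le_compat_l _ _ _ Ha (norm4_q_lin_le Sig d HSig)).
  assert (Hquad := Rmult_le_compat_l _ _ _ Ha (norm4_q_quad_le d)).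
  assert (CSlin := Rabs_dot4_le a (q_lin Sig d)).
  assert (CSquad := Rabs_dot4_le a (q_quad d)).
  eapply Rle_trans; [apply Rabs_triang|].
  lra.
Qed.
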